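(* Let $(S,\rightarrow)$ be a PNTS, $\phi$ a {\L}ukasiewicz modal $\mu$-calculus formula and $\rho$ an interpretation of the variables and propositional letters. Then, for all $s\in S$, \[ [\![\mathbb{P}_{\rtimes q}\phi]\!]_\rho(s)= \begin{cases} 1 & \text{if } [\![\phi]\!]_\rho (s) \rtimes q \\ 0 & \text{otherwise.}\end{cases} \]
   Context: $\mathcal{D}(S)=\{d:S\to[0,1]\mid \sum_{s\in S}d(s)=1\}$ is the set of discrete probability distributions on $S$. A probabilistic nondeterministic transition system (PNTS) is a pair $(S,\rightarrow)$ with $S$ a set of states and $\rightarrow\ \subseteq S\times\mathcal{D}(S)$. Formulas of the {\L}ukasiewicz modal $\mu$-calculus are generated by $\phi ::= X \mid P \mid \overline{P} \mid q\,\phi \mid \phi\sqcup\phi \mid \phi\sqcap\phi \mid \phi\oplus\phi \mid \phi\odot\phi \mid \Diamond\phi \mid \Box\phi \mid \mu X.\phi \mid \nu X.\phi$, with $q$ rational in $[0,1]$, $X$ a variable, $P$ a propositional letter with complement $\overline{P}$; $\underline{1}$ denotes $\nu X.X$ and $\underline{q}$ denotes $q\,\underline{1}$. An interpretation is $\rho:(\mathrm{Var}\uplus\mathrm{Prop})\to(S\to[0,1])$ with $\rho(\overline{P})(x)=1-\rho(P)(x)$. Semantics $[\![\phi]\!]_\rho:S\to[0,1]$: $[\![X]\!]_\rho=\rho(X)$, $[\![P]\!]_\rho=\rho(P)$, $[\![\overline P]\!]_\rho=1-\rho(P)$, $[\![q\,\phi]\!]_\rho(x)=q\cdot[\![\phi]\!]_\rho(x)$,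 $\sqcup,\sqcap$ are pointwise max/min, $[\![\phi\oplus\psi]\!]_\rho(x)=\min\{1,[\![\phi]\!]_\rho(x)+[\![\psi]\!]_\rho(x)\}$, $[\![\phi\odot\psi]\!]_\rho(x)=\max\{0,[\![\phi]\!]_\rho(x)+[\![\psi]\!]_\rho(x)-1\}$, $[\![\Diamond\phi]\!]_\rho(x)=\sup_{x\rightarrow d}\sum_{y\in S}d(y)[\![\phi]\!]_\rho(y)$, $[\![\Box\phi]\!]_\rho(x)=\inf_{x\rightarrow d}\sum_{y\in S}d(y)[\![\phi]\!]_\rho(y)$ (the empty sup is $0$, the empty inf is $1$), and $\mu X.\phi$, $\nu X.\phi$ denote the least and greatest fixed points of $f\mapsto[\![\phi]\!]_{\rho[f/X]}$. Threshold modalities: $\mathbb{P}_{>0}\phi=\mu Y.(Y\oplus\phi)$, $\mathbb{P}_{=1}\phi=\nu Y.(Y\odot\phi)$, and for $r\in(0,1)$, $\mathbb{P}_{>r}\phi=\mathbb{P}_{>0}(\phi\odot\underline{1-r})$, $\mathbb{P}_{\geq r}\phi=\mathbb{P}_{=1}(\phi\oplus\underline{1-r})$, where $Y$ does not occur in $\phi$; $\mathbb{P}_{\rtimes q}$ denotes any of these four, with $\rtimes q$ the corresponding condition $>0$, $=1$, $>r$, $\geq r$. *)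

From HB Require Import structures.
From mathcomp Require Import all_boot all_order all_algebra.
From mathcomp Require Import boolp classical_sets reals constructive_ereal ereal esum.
Set Implicit Arguments. Unset Strict Implicit. Unset Printing Implicit Defensive.
Import Order.TTheory GRing.Theory Num.Theory.
Local Open Scope classical_set_scope.
Local Open Scope ring_scope.

Inductive formula : Type :=
| FVar  of nat
| FProp of nat
| FNProp of nat
| FScale of rat & formula
| FMax  of formula & formula
| FMin  of formula & formula
| FOplus of formula & formula
| FOdot of formula & formula
| FDia  of formula
| FBox  of formula
| FMu   of nat & formula
| FNu   of nat & formula.

Fixpoint wf_formula (f : formula) : Prop :=
  match f with
  | FVar _ | FProp _ | FNProp _ => True
  | FScale q g => (0 <= q <= 1)%R /\ wf_formula g
  | FMax g h | FMin g h | FOplus g h | FOdot g h => wf_formula g /\ wf_formula h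
  | FDia g | FBox g => wf_formula g
  | FMu _ g | FNu _ g => wf_formula g
  end.

Fixpoint occurs (Y : nat) (f : formula) : Prop :=
  match f with
  | FVar X => X = Y
  | FProp _ | FNProp _ => False
  | FScale _ g => occurs Y g
  | FMax g h | FMin g h | FOplus g h | FOdot g h => occurs Y g \/ occurs Y h
  | FDia g | FBox g => occurs Y g
  | FMu X g | FNu X g => X = Y \/ occurs Y g
  end.

Section Semantics.
Variables (R : realType) (S : choiceType).

Definition is_distr (d : S -> R) : Prop :=
  (forall s, 0 <= d s <= 1) /\ (\esum_(s in [set: S]) (d s)%:E = 1)%E.

Definition is_pnts (trans : S -> (S -> R) -> Prop) : Prop :=
  forall x d, trans x d -> is_distr d.

Definition unit_fun (g : S -> R) : Prop := forall s, 0 <= g s <= 1.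

Definition expect (d f : S -> R) : R :=
  fine (\esum_(y in [set: S]) (d y * f y)%:E).

(* least / greatest fixed points of F on the complete lattice S -> [0,1]
   (Knaster-Tarski: meet of prefixed points / join of postfixed points) *)
Definition lfp (F : (S -> R) -> (S -> R)) : S -> R := fun x =>
  inf [set g x | g in [set g | unit_fun g /\ (forall y, F g y <= g y)]].
Definition gfp (F : (S -> R) -> (S -> R)) : S -> R := fun x =>
  sup [set g x | g in [set g | unit_fun g /\ (forall y, g y <= F g y)]].

Definition upd (rho : nat -> S -> R) (X : nat) (g : S -> R) : nat -> S -> R :=
  fun Z => if Z == X then g else rho Z.

Variable trans : S -> (S -> R) -> Prop.

Definition dia (f : S -> R) : S -> R := fun x =>
  if `[< exists d, trans x d >] then sup [set expect d f | d in trans x] else 0.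
Definition box (f : S -> R) : S -> R := fun x =>
  if `[< exists d, trans x d >] then inf [set expect d f | d in trans x] else 1.

Fixpoint sem (f : formula) (rhov rhop : nat -> S -> R) : S -> R :=
  match f with
  | FVar X => rhov X
  | FProp P => rhop P
  | FNProp P => fun x => 1 - rhop P x
  | FScale q g => fun x => ratr q * sem g rhov rhop x
  | FMax g h => fun x => Num.max (sem g rhov rhop x) (sem h rhov rhop x)
  | FMin g h => fun x => Num.min (sem g rhov rhop x) (sem h rhov rhop x)
  | FOplus g h => fun x => Num.min 1 (sem g rhov rhop x + sem h rhov rhop x)
  | FOdot g h => fun x => Num.max 0 (sem g rhov rhop x + sem h rhov rhop x - 1)
  | FDia g => dia (sem g rhov rhop)
  | FBox g => box (sem g rhov rhop)
  | FMu X g => lfp (fun v => sem g (upd rhov X v) rhop)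
  | FNu X g => gfp (fun v => sem g (upd rhov X v) rhop)
  end.

End Semantics.

Definition fone : formula := FNu 0 (FVar 0).
Definition fconst (q : rat) : formula := FScale q fone.

Inductive threshold : Type :=
| ThGt0 | ThEq1 | ThGt of rat | ThGe of rat.

Definition wf_threshold (t : threshold) : Prop :=
  match t with
  | ThGt0 | ThEq1 => True
  | ThGt r | ThGe r => (0 < r < 1)%R
  end.

Definition PGt0 (Y : nat) (f : formula) : formula := FMu Y (FOplus (FVar Y) f).
Definition PEq1 (Y : nat) (f : formula) : formula := FNu Y (FOdot (FVar Y) f).

Definition thr_formula (t : threshold) (Y : nat) (f : formula) : formula :=
  match t with
  | ThGt0 => PGt0 Y f
  | ThEq1 => PEq1 Y f
  | ThGt r => PGt0 Y (FOdot f (fconst (1 - r)))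
  | ThGe r => PEq1 Y (FOplus f (fconst (1 - r)))
  end.

Definition thr_holds {R : realType} (t : threshold) (v : R) : bool :=
  match t with
  | ThGt0 => 0 < v
  | ThEq1 => v == 1
  | ThGt r => ratr r < v
  | ThGe r => ratr r <= v
  end.

From HB Require Import structures.
From mathcomp Require Import all_boot all_order all_algebra.
From mathcomp Require Import boolp classical_sets reals constructive_ereal ereal esum.
From mathcomp Require Import lra.
Set Implicit Arguments. Unset Strict Implicit. Unset Printing Implicit Defensive.
Import Order.TTheory GRing.Theory Num.Theory.
Local Open Scope classical_set_scope.
Local Open Scope ring_scope.

(* The pre-fixed points g of g |-> g ⊕ a with values in [0,1] satisfy g s = 1
   wherever a s > 0, and the indicator of {a > 0} is one of them, so it is the
   least fixed point. Dually, the post-fixed points of g |-> g ⊙ a vanish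
   wherever a s < 1 and the indicator of {a = 1} is one of them. Since the
   semantics takes values in [0,1], this settles P>0 and P=1; the other two
   thresholds reduce to these because φ ⊙ (1-r) > 0 iff φ > r and
   φ ⊕ (1-r) = 1 iff φ >= r. *)

(* [occurs] also counts binders, and [fconst] binds the variable 0, so
   [~ occurs Y] does not survive the shift by [fconst (1 - r)]. *)
Fixpoint free_in (Y : nat) (f : formula) : Prop :=
  match f with
  | FVar X => X = Y
  | FProp _ | FNProp _ => False
  | FScale _ g => free_in Y g
  | FMax g h | FMin g h | FOplus g h | FOdot g h => free_in Y g \/ free_in Y h
  | FDia g | FBox g => free_in Y g
  | FMu X g | FNu X g => X <> Y /\ free_in Y g
  end.

Lemma occurs_free_in Y f : free_in Y f -> occurs Y f.
Proof. by elim: f => //=; tauto. Qed.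

Section RealBounds.
Variable R : realType.

Lemma sup_eq_max (E : set R) c : E c -> (forall x, E x -> x <= c) -> sup E = c.
Proof.
move=> Ec ub; apply/le_anti/andP; split.
- by apply: ge_sup; [exists c|].
- by apply: (ub_le_sup _ Ec); exists c.
Qed.

Lemma inf_eq_min (E : set R) c : E c -> (forall x, E x -> c <= x) -> inf E = c.
Proof.
move=> Ec lb; apply/le_anti/andP; split.
- by apply: (ge_inf _ Ec); exists c.
- by apply: lb_le_inf; [exists c|].
Qed.

Lemma sup_in01 (E : set R) : E !=set0 -> (forall x, E x -> 0 <= x <= 1) ->
  0 <= sup E <= 1.
Proof.
move=> [c Ec] E01; have /andP[c0 _] := E01 _ Ec; apply/andP; split.
- by apply: le_trans c0 (ub_le_sup _ Ec); exists 1 => x /E01 /andP[].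
- by apply: ge_sup; [exists c|move=> x /E01 /andP[]].
Qed.

Lemma inf_in01 (E : set R) : E !=set0 -> (forall x, E x -> 0 <= x <= 1) ->
  0 <= inf E <= 1.
Proof.
move=> [c Ec] E01; have /andP[_ c1] := E01 _ Ec; apply/andP; split.
- by apply: lb_le_inf; [exists c|move=> x /E01 /andP[]].
- by apply: le_trans (ge_inf _ Ec) c1; exists 0 => x /E01 /andP[].
Qed.

End RealBounds.

Section Semantics.
Variables (R : realType) (S : choiceType) (trans : S -> (S -> R) -> Prop).
Implicit Types (rhov rhop : nat -> S -> R) (a g v : S -> R).

Lemma upd_same rhov X g : upd rhov X g X = g.
Proof. by rewrite /upd eqxx. Qed.

Lemma upd_upd_same rhov X g h : upd (upd rhov X g) X h = upd rhov X h.
Proof. by apply: funext => Z; rewrite /upd; case: eqP. Qed.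

Lemma upd_comm rhov X Y g h : X <> Y ->
  upd (upd rhov Y g) X h = upd (upd rhov X h) Y g.
Proof. by move=> XY; apply: funext => Z; rewrite /upd; do 2!case: eqP => // ->. Qed.

Lemma sem_upd_not_free rhop f : forall rhov Y v, ~ free_in Y f ->
  sem trans f (upd rhov Y v) rhop = sem trans f rhov rhop.
Proof.
elim: f => //= [X|q g IH|g IHg h IHh|g IHg h IHh|g IHg h IHh|g IHg h IHh
  |g IH|g IH|X g IH|X g IH] rhov Y v nfree.
- by rewrite /upd; case: eqP.
- by rewrite IH.
- by rewrite IHg ?IHh //; tauto.
- by rewrite IHg ?IHh //; tauto.
- by rewrite IHg ?IHh //; tauto.
- by rewrite IHg ?IHh //; tauto.
- by rewrite IH.
- by rewrite IH.
- congr lfp; apply: funext => w; have [->|/eqP XY] := eqVneq X Y.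
    by rewrite upd_upd_same.
  by rewrite upd_comm // IH //; tauto.
- congr gfp; apply: funext => w; have [->|/eqP XY] := eqVneq X Y.
    by rewrite upd_upd_same.
  by rewrite upd_comm // IH //; tauto.
Qed.

Lemma unit_fun_upd rhov X g : (forall Z, unit_fun (rhov Z)) -> unit_fun g ->
  forall Z, unit_fun (upd rhov X g Z).
Proof. by move=> rho01 g01 Z; rewrite /upd; case: eqP. Qed.

Lemma unit_fun0 : unit_fun (fun _ : S => 0 : R).
Proof. by move=> ?; rewrite lexx ler01. Qed.

Lemma unit_fun1 : unit_fun (fun _ : S => 1 : R).
Proof. by move=> ?; rewrite lexx ler01. Qed.

Lemma expect_in01 d g : is_distr d -> unit_fun g -> 0 <= expect d g <= 1.
Proof.
move=> [d01 d1] g01; rewrite /expect.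
have e0 : (0 <= \esum_(y in [set: S]) (d y * g y)%:E)%E.
  apply: esum_ge0 => y _; rewrite lee_fin.
  by have /andP[? _] := d01 y; have /andP[? _] := g01 y; rewrite mulr_ge0.
have e1 : (\esum_(y in [set: S]) (d y * g y)%:E <= 1)%E.
  rewrite -d1; apply: le_esum => y _; rewrite lee_fin.
  by have /andP[? _] := d01 y; have /andP[_ ?] := g01 y; rewrite ler_piMr.
by move: e0 e1; case: (\esum_(y in _) _)%E => [r| |] //=; rewrite !lee_fin => -> ->.
Qed.

Lemma unit_fun_lfp (F : (S -> R) -> S -> R) :
  (forall g, unit_fun g -> unit_fun (F g)) -> unit_fun (lfp F).
Proof.
move=> F01 x; apply: inf_in01 => [|_ [g [g01 _] <-] //].
exists 1, (fun=> 1) => //; split => [|y]; first exact: unit_fun1.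
by have /andP[_ ->] := F01 _ unit_fun1 y.
Qed.

Lemma unit_fun_gfp (F : (S -> R) -> S -> R) :
  (forall g, unit_fun g -> unit_fun (F g)) -> unit_fun (gfp F).
Proof.
move=> F01 x; apply: sup_in01 => [|_ [g [g01 _] <-] //].
exists 0, (fun=> 0) => //; split => [|y]; first exact: unit_fun0.
by have /andP[-> _] := F01 _ unit_fun0 y.
Qed.

Section Bounded.
Hypothesis pnts : is_pnts trans.

Lemma expect_trans_in01 g x : unit_fun g ->
  forall e, [set expect d g | d in trans x] e -> 0 <= e <= 1.
Proof. by move=> g01 _ [d xd <-]; apply: expect_in01 => //; apply: pnts xd. Qed.

Lemma unit_fun_dia g : unit_fun g -> unit_fun (dia trans g).
Proof.
move=> g01 x; rewrite /dia; case: asboolP => [[d xd]|_]; last by rewrite lexx ler01.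
by apply: sup_in01; [exists (expect d g), d|exact: expect_trans_in01].
Qed.

Lemma unit_fun_box g : unit_fun g -> unit_fun (box trans g).
Proof.
move=> g01 x; rewrite /box; case: asboolP => [[d xd]|_]; last by rewrite lexx ler01.
by apply: inf_in01; [exists (expect d g), d|exact: expect_trans_in01].
Qed.

Lemma unit_fun_sem rhop f : (forall P, unit_fun (rhop P)) ->
  wf_formula f -> forall rhov, (forall X, unit_fun (rhov X)) ->
  unit_fun (sem trans f rhov rhop).
Proof.
move=> rhop01; elim: f => /= [X|P|P|q g IH|g IHg h IHh|g IHg h IHh
  |g IHg h IHh|g IHg h IHh|g IH|g IH|X g IH|X g IH] wf rhov rho01 //.
- by move=> x; have /andP[? ?] := rhop01 P x; apply/andP; split; lra.
- case: wf => /andP[q0 q1] /IH /(_ _ rho01) g01 x; have /andP[? ?] := g01 x.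
  have r0 : 0 <= ratr q :> R by rewrite ler0q.
  have r1 : ratr q <= 1 :> R by rewrite -(rmorph1 (ratr : rat -> R)) ler_rat.
  by rewrite mulr_ge0 //= mulr_ile1.
- case: wf => /IHg /(_ _ rho01) g01 /IHh /(_ _ rho01) h01 x.
  have /andP[a0 a1] := g01 x; have /andP[b0 b1] := h01 x.
  by rewrite le_max ge_max a0 a1 b1.
- case: wf => /IHg /(_ _ rho01) g01 /IHh /(_ _ rho01) h01 x.
  have /andP[a0 a1] := g01 x; have /andP[b0 b1] := h01 x.
  by rewrite le_min ge_min a0 a1 b0.
- case: wf => /IHg /(_ _ rho01) g01 /IHh /(_ _ rho01) h01 x.
  have /andP[a0 a1] := g01 x; have /andP[b0 b1] := h01 x.
  by rewrite le_min ge_min lexx ler01 addr_ge0.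
- case: wf => /IHg /(_ _ rho01) g01 /IHh /(_ _ rho01) h01 x.
  have /andP[a0 a1] := g01 x; have /andP[b0 b1] := h01 x.
  by rewrite le_max ge_max lexx ler01 /=; lra.
- exact/unit_fun_dia/IH.
- exact/unit_fun_box/IH.
- by apply: unit_fun_lfp => v v01; apply: IH => //; apply: unit_fun_upd.
- by apply: unit_fun_gfp => v v01; apply: IH => //; apply: unit_fun_upd.
Qed.

End Bounded.

Lemma lfp_oplus_indicator (F : (S -> R) -> S -> R) a s :
  (forall v x, F v x = Num.min 1 (v x + a x)) ->
  lfp F s = if 0 < a s then 1 else 0.
Proof.
move=> Fa; apply: inf_eq_min => [|_ [g [g01 gpre] <-]].
- exists (fun y => if 0 < a y then 1 else 0) => //; split => [y|y].
    by case: ifP => _; [exact: unit_fun1|exact: unit_fun0].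
  by rewrite Fa; case: ifPn => ay; rewrite ge_min ?lexx // add0r (leNgt (a y)) ay orbT.
- have := gpre s; have /andP[g0 g1] := g01 s; rewrite Fa ge_min.
  by case: ifPn => // as0 /orP[] //; lra.
Qed.

Lemma gfp_odot_indicator (F : (S -> R) -> S -> R) a s :
  (forall v x, F v x = Num.max 0 (v x + a x - 1)) ->
  gfp F s = if 1 <= a s then 1 else 0.
Proof.
move=> Fa; apply: sup_eq_max => [|_ [g [g01 gpost] <-]].
- exists (fun y => if 1 <= a y then 1 else 0) => //; split => [y|y].
    by case: ifP => _; [exact: unit_fun1|exact: unit_fun0].
  by rewrite Fa le_max; case: ifPn => ay; apply/orP; [right; lra|left].
- have := gpost s; have /andP[g0 g1] := g01 s; rewrite Fa le_max.
  by case: ifPn => //; rewrite -ltNge => as1 /orP[] //; lra.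
Qed.

Lemma gfp_var rhov X : gfp (fun v => upd rhov X v X) = fun=> 1.
Proof.
apply: funext => x; apply: sup_eq_max => [|_ [g [g01 _] <-]]; last by have /andP[] := g01 x.
by exists (fun=> 1) => //; split => [|y]; [exact: unit_fun1|rewrite upd_same].
Qed.

Lemma sem_PGt0 Y f rhov rhop s : ~ free_in Y f ->
  sem trans (PGt0 Y f) rhov rhop s =
  (if 0 < sem trans f rhov rhop s then 1 else 0).
Proof.
move=> nfree; rewrite -[LHS]/(lfp (fun v x =>
  Num.min 1 (upd rhov Y v Y x + sem trans f (upd rhov Y v) rhop x)) s).
by apply: lfp_oplus_indicator => v x; rewrite upd_same sem_upd_not_free.
Qed.

Lemma sem_PEq1 Y f rhov rhop s : ~ free_in Y f ->
  sem trans (PEq1 Y f) rhov rhop s =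
  (if 1 <= sem trans f rhov rhop s then 1 else 0).
Proof.
move=> nfree; rewrite -[LHS]/(gfp (fun v x =>
  Num.max 0 (upd rhov Y v Y x + sem trans f (upd rhov Y v) rhop x - 1)) s).
by apply: gfp_odot_indicator => v x; rewrite upd_same sem_upd_not_free.
Qed.

End Semantics.

Theorem mainTheorem4 (R : realType) (S : choiceType)
  (trans : S -> (S -> R) -> Prop) (Htrans : is_pnts trans)
  (phi : formula) (Hphi : wf_formula phi)
  (rhov rhop : nat -> S -> R)
  (Hrhov : forall X, unit_fun (rhov X)) (Hrhop : forall P, unit_fun (rhop P))
  (t : threshold) (Ht : wf_threshold t)
  (Y : nat) (HY : ~ occurs Y phi) (s : S) :
  sem trans (thr_formula t Y phi) rhov rhop s =
  (if thr_holds t (sem trans phi rhov rhop s) then 1 else 0).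
Proof.
have nfree : ~ free_in Y phi by move/occurs_free_in.
have nfree_c q : ~ free_in Y (fconst q) by move=> /= [].
have /andP[_ phi1] := unit_fun_sem Htrans Hrhop Hphi Hrhov s.
case: t Ht => [_|_|r _|r _]; rewrite [thr_formula _ _ _]/= [thr_holds _ _]/=.
- exact: sem_PGt0.
- by rewrite sem_PEq1 // eq_le phi1.
- rewrite sem_PGt0 /=; last by move=> /= [/nfree|/nfree_c].
  by rewrite gfp_var mulr1 rmorphB rmorph1 lt_max ltxx /= addrCA (addrC 1) addrK subr_gt0.
- rewrite sem_PEq1 /=; last by move=> /= [/nfree|/nfree_c].
  by rewrite gfp_var mulr1 rmorphB rmorph1 le_min lexx /= addrCA lerDl subr_ge0.
Qed.
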